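(* Let $n\ge3$ be odd. Then the slope of the right-most edge of the Newton polygon of $R_{(n,2)}(x)$ with respect to the prime $3$ is strictly less than $\frac12$ if $3\mid n+1$, and is equal to $\frac12$ if $3\nmid n+1$.
   Context: $\mathrm{He}_k(x)$ denotes the monic probabilists' Hermite polynomial of degree $k$. $\mathrm{He}_{(n,2)}(x)=\mathrm{Wr}[\mathrm{He}_2,\mathrm{He}_{n+1}]/(n-1)$ (the Wronskian Hermite polynomial of the partition $(n,2)$, whose degree sequence is $(2,n+1)$), a monic integer polynomial of degree $n+2$. For $n$ odd, $\mathrm{He}_{(n,2)}(x)=x\,R_{(n,2)}(x)$ with $R_{(n,2)}\in\mathbb{Z}[x]$, $R_{(n,2)}(0)\ne0$. For $G(x)=\sum_{i=0}^N a_ix^i\in\mathbb{Z}[x]$ with $a_0\neq0$ and a prime $p$, the Newton polygon of $G$ with respect to $p$ is the lower convex hull of the points $(i,\nu_p(a_{N-i}))$, $0\le i\le N$, $a_{N-i}\ne0$ ($\nu_p$ the $p$-adic valuation); its right-most edge is the edge ending at $(N,\nu_p(a_0))$. *)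

From HB Require Import structures.
From mathcomp Require Import all_boot all_order all_algebra.
Set Implicit Arguments. Unset Strict Implicit. Unset Printing Implicit Defensive.
Import Order.TTheory GRing.Theory Num.Theory.
Local Open Scope ring_scope.

(* herm_pair k = (He_k, He_(k+1)), using He_0 = 1, He_1 = x,
   He_(k+2) = x He_(k+1) - (k+1) He_k  (monic probabilists' Hermite). *)
Fixpoint herm_pair (k : nat) : {poly int} * {poly int} :=
  match k with
  | 0%N => (1, 'X)
  | k'.+1 => let (a, b) := herm_pair k' in (b, 'X * b - a *+ k'.+1)
  end.

Definition He (k : nat) : {poly int} := (herm_pair k).1.

Definition Wr2 (f g : {poly int}) : {poly int} := f * g^`() - f^`() * g.

(* He_(n,2) = Wr[He_2, He_(n+1)] / (n-1); the division is exact
   (the result lies in Z[x]), performed coefficientwise in int. *)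
Definition He_n2 (n : nat) : {poly int} :=
  let W := Wr2 (He 2) (He n.+1) in
  \poly_(i < size W) ((W`_i %/ (n%:Z - 1))%Z).

(* R_(n,2) = He_(n,2) / x (for odd n, He_(n,2)(0) = 0). *)
Definition R_n2 (n : nat) : {poly int} := drop_poly 1 (He_n2 n).

Definition nu (p : nat) (a : int) : nat := logn p `|a|%N.

(* s is the slope of the right-most edge of the Newton polygon of G w.r.t. p,
   i.e. of the lower convex hull of the points (i, nu_p(a_(N-i))), a_(N-i) <> 0,
   0 <= i <= N: the edge ending at (N, nu_p(a_0)) is supported by the line
   through (N, nu_p(a_0)) of slope s, which lies weakly below every point and
   passes through some other point (i, nu_p(a_(N-i))) with i < N. *)
Definition rightmost_edge_slope (p : nat) (G : {poly int}) (s : rat) : Prop :=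
  let N := (size G).-1 in
  (forall i : nat, (i <= N)%N -> G`_(N - i) != 0 ->
      (nu p G`_0)%:R - s * (N - i)%:R <= (nu p G`_(N - i))%:R :> rat)
  /\ (exists2 i : nat, (i < N)%N &
      G`_(N - i) != 0 /\
      (nu p G`_(N - i))%:R = (nu p G`_0)%:R - s * (N - i)%:R :> rat).

From HB Require Import structures.
From mathcomp Require Import all_boot all_order all_algebra.
From mathcomp Require Import ring lra zify.
Import Order.TTheory GRing.Theory Num.Theory.
Local Open Scope ring_scope.

(* Write n = 2K + 3.  The proof combines three independent developments.
   1. Hermite polynomials: the coefficient of x^i in He_(i+2j) is
      (-1)^j (i+2j)! / (j! i! 2^j), and He_(k+1)' = (k+1) He_k; hence
      He_(m+2,2) = (x^2+1) He_(m+2) + 2(m+2) He_m.  For R = R_(n,2) this shows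
      that only even coefficients survive, that deg R = 2K + 4, and that for
      t + u = K + 2
        R_(2t) u! (2t+1)! 2^u = +-(2K+1)! n 4 (K+2) (2t(t-1) + K + 1),
      so every even coefficient is nonzero with an explicit 3-adic valuation.
   2. Legendre-type estimates: (p-1) nu_p(m!) < m for m > 0, and nu_p(m!) is
      monotone in m.  With 1. they give nu(R_0) + nu(K+2) <= nu(R_(2t)) + t
      for 0 < t <= K + 2, with equality at t = 1.
   3. Newton polygons: the right-most edge slope is the largest ratio
      (nu(G_0) - nu(G_j)) / j over the nonzero coefficients G_j with j > 0.
   As 3 | n + 1 = 2(K+2) iff nu_3(K+2) > 0, the estimate of 2. bounds every
   ratio by 1/2 (strictly when 3 | n + 1), and the ratio at j = 2 equals 1/2
   when 3 does not divide n + 1. *)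

Lemma He0 : He 0 = 1. Proof. by []. Qed.

Lemma He1 : He 1 = 'X. Proof. by []. Qed.

Lemma HeSS k : He k.+2 = 'X * He k.+1 - He k *+ k.+1.
Proof. by rewrite /He /=; case: (herm_pair k). Qed.

Lemma coef_HeSS k i :
  (He k.+2)`_i = (if i is i'.+1 then (He k.+1)`_i' else 0) - (He k)`_i *+ k.+1.
Proof. by rewrite HeSS coefB coefXM coefMn; case: i. Qed.

Lemma He_ind (P : nat -> Prop) :
  P 0%N -> P 1%N -> (forall k, P k -> P k.+1 -> P k.+2) -> forall k, P k.
Proof.
move=> P0 P1 PSS k; suff: P k /\ P k.+1 by case.
by elim: k => [|k [Pk Pk1]]; split=> //; apply: PSS.
Qed.

Lemma coef_He_eq0 k i : ((k < i)%N || odd (k + i)) -> (He k)`_i = 0.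
Proof.
elim/He_ind: k i => [i|i|k IH0 IH1 i] h.
- by rewrite He0 coefC; case: i h.
- by rewrite He1 coefX; case: i h => [|[|i]].
rewrite coef_HeSS IH0 ?mul0rn ?subr0; last by lia.
by case: i h => // i h; apply: IH1; lia.
Qed.

Lemma coef_He_lead k : (He k)`_k = 1.
Proof.
elim/He_ind: k => [|| k _ IH]; [by rewrite He0 coefC | by rewrite He1 coefX |].
by rewrite coef_HeSS IH [(He k)`_k.+2]coef_He_eq0 ?mul0rn ?subr0 // ltnW.
Qed.

Lemma coef_He i j :
  (He (i + 2 * j))`_i * (j`! * i`! * 2 ^ j)%:R = (-1) ^+ j * ((i + 2 * j)`!)%:R.
Proof.
elim: j i => [|j IHj] i.
  by rewrite muln0 addn0 coef_He_lead fact0 expn0 mul1n muln1 !mul1r.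
have e k : (k + 2 * j.+1 = (k + 2 * j).+2)%N by lia.
have scaleS k : (j.+1`! * k`! * 2 ^ j.+1 = (j`! * k`! * 2 ^ j) * (2 * j.+1))%N.
  by rewrite factS expnS; ring.
elim: i => [|i IHi].
  rewrite e coef_HeSS sub0r mulNr mulrnAl scaleS natrM mulrA IHj !factS.
  rewrite !natrM exprS; ring.
have T1 : (He (i.+1 + 2 * j).+1)`_i * (j.+1`! * i.+1`! * 2 ^ j.+1)%:R
          = (-1) ^+ j.+1 * ((i.+1 + 2 * j).+1`!)%:R * i.+1%:R.
  rewrite (factS i) (_ : (_ * (i.+1 * _) * _ = (j.+1`! * i`! * 2 ^ j.+1) * i.+1)%N);
    last by ring.
  by rewrite natrM mulrA (_ : (i.+1 + 2 * j).+1 = i + 2 * j.+1)%N ?IHi //; lia.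
have T2 : (He (i.+1 + 2 * j))`_i.+1 * (j.+1`! * i.+1`! * 2 ^ j.+1)%:R
          = (-1) ^+ j * ((i.+1 + 2 * j)`!)%:R * (2 * j.+1)%:R.
  by rewrite scaleS natrM mulrA IHj.
rewrite e coef_HeSS mulrBl mulrnAl T1 T2 !factS !natrM exprS; ring.
Qed.

Lemma deriv_He k : (He k.+1)^`() = He k *+ k.+1.
Proof.
elim/He_ind: k => [||k IH0 IH1]; first by rewrite He1 derivX.
  by rewrite HeSS He1 He0 derivB derivM derivX derivC; ring.
by rewrite HeSS derivB derivM derivX derivMn IH1 IH0 (HeSS k); ring.
Qed.

Lemma Wr2_He2 m :
  Wr2 (He 2) (He m.+3) = (('X * 'X + 1) * He m.+2 + He m *+ (2 * m.+2)) *+ m.+1.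
Proof.
rewrite /Wr2 !deriv_He (HeSS m.+1) (HeSS m) (HeSS 0) He0 He1; ring.
Qed.

Lemma He_n2E m : He_n2 m.+2 = ('X * 'X + 1) * He m.+2 + He m *+ (2 * m.+2).
Proof.
apply/polyP => i; rewrite /He_n2 coef_poly Wr2_He2; set W := _ + _ *+ _.
rewrite (_ : m.+2%:Z - 1 = m.+1%:R); last by ring.
have m1_neq0 : m.+1%:R != 0 :> int by rewrite pnatr_eq0.
case: ltnP => [_|/(nth_default 0) /eqP]; rewrite coefMn -[W`_i *+ _]mulr_natl.
  by rewrite mulKz.
by rewrite mulf_eq0 (negPf m1_neq0) => /eqP ->.
Qed.

Lemma coef_R_n2 m j : (R_n2 m.+2)`_j =
  ('X * He m.+2)`_j + (He m.+2)`_j.+1 + (He m)`_j.+1 *+ (2 * m.+2).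
Proof.
rewrite /R_n2 coef_drop_poly He_n2E addn1 coefD coefMn mulrDl mul1r coefD.
by rewrite -mulrA (coefXM ('X * _)).
Qed.

Section Legendre.
Local Open Scope nat_scope.

Lemma logn_fact_rec p k : prime p -> logn p k`! = k %/ p + logn p (k %/ p)`!.
Proof.
move=> p_pr; have p_gt1 := prime_gt1 p_pr.
case: k => [|k]; first by rewrite div0n fact0 logn1.
rewrite !logn_fact // big_ltn // expn1; congr (_ + _).
rewrite big_add1 /=.
under eq_bigr do rewrite expnS divnMA.
have q_lt : k.+1 %/ p < k.+1 by rewrite ltn_Pdiv.
rewrite (big_cat_nat _ (n := (k.+1 %/ p).+1)) //= [X in _ + X]big1_seq ?addn0 //.
move=> i /andP [_]; rewrite mem_index_iota => /andP [hi _].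
rewrite divn_small //; apply: leq_trans (ltn_expl _ p_gt1); lia.
Qed.

Lemma logn_fact_lt p k : prime p -> 0 < k -> p.-1 * logn p k`! < k.
Proof.
move=> p_pr; have p_gt1 := prime_gt1 p_pr.
elim: k {-2}k (leqnn k) => [|N IH] k kN k_gt0; first lia.
have q_lt_k : k %/ p < k by rewrite ltn_Pdiv.
have qp_le_k := leq_divM k p.
rewrite logn_fact_rec //; case: (k %/ p) q_lt_k qp_le_k => [|q] q_lt_k qp_le_k.
  by rewrite fact0 logn1; lia.
have := IH q.+1 ltac:(lia) isT; nia.
Qed.

(* m! divides n! when m <= n. *)
Lemma logn_fact_mono p m n : m <= n -> logn p m`! <= logn p n`!.
Proof.
move=> le_mn; apply: dvdn_leq_log; first exact: fact_gt0.
by rewrite (fact_split le_mn) dvdn_mulr.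
Qed.

End Legendre.

Section RightmostEdge.
Variables (p : nat) (G : {poly int}).
Local Notation N := (size G).-1.

Definition nu_gap (j : nat) : rat := (nu p G`_0)%:R - (nu p G`_j)%:R.

(* Reindexing by j = N - i: s is the right-most edge slope iff s j bounds
   every gap at a nonzero coefficient and is attained at some 0 < j <= N. *)
Lemma rightmost_edge_slopeE s : rightmost_edge_slope p G s <->
  (forall j, (j <= N)%N -> G`_j != 0 -> nu_gap j <= s * j%:R)
  /\ (exists2 j, (0 < j <= N)%N & G`_j != 0 /\ nu_gap j = s * j%:R).
Proof.
rewrite /rightmost_edge_slope /nu_gap /=; set M := (size G).-1.
split=> -[below [i i_lt_M [nz_i eq_i]]].
  split; last by exists (M - i)%N; [lia | split=> //; lra].
  move=> j le_jM nz_j; have := below (M - j)%N (leq_subr _ _).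
  by rewrite subKn // => /(_ nz_j); lra.
split; last by exists (M - i)%N; [lia | rewrite subKn; [split=> //; lra | lia]].
move=> j le_jM nz_j; have := below (M - j)%N (leq_subr _ _) nz_j; lra.
Qed.

(* The edge exists as soon as deg G > 0: take a maximal ratio gap(j) / j. *)
Lemma edge_slope_exists : (1 < size G)%N -> exists s, rightmost_edge_slope p G s.
Proof.
move=> size_gt1.
pose P (j : 'I_N.+1) := (0 < j)%N && (G`_j != 0).
pose slope (j : 'I_N.+1) := nu_gap j / j%:R.
have P_N : P ord_max.
  by rewrite /P /= -lead_coefE lead_coef_eq0 -size_poly_gt0; case: (size G) size_gt1 => [|[]].
case: (arg_maxP slope P_N) => j0 /andP [j0_gt0 nz_j0] j0_max.
have slopeK (j : 'I_N.+1) : (0 < j)%N -> slope j * j%:R = nu_gap j.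
  by move=> j_gt0; rewrite mulfVK // pnatr_eq0 -lt0n.
exists (slope j0); apply/rightmost_edge_slopeE; split; last first.
  by exists j0; [rewrite j0_gt0 -ltnS ltn_ord | split; rewrite ?slopeK].
move=> j le_jN nz_j; case: (posnP j) => [->|j_gt0]; first by rewrite /nu_gap subrr mulr0.
have := j0_max (Ordinal (le_jN : (j < N.+1)%N)); rewrite /P /= j_gt0 nz_j => /(_ isT).
rewrite -(ler_pM2r (_ : 0 < j%:R :> rat)) ?ltr0n // (slopeK (Ordinal _)) //.
Qed.

Lemma nz_coef_le_N j : G`_j != 0 -> (j <= N)%N.
Proof.
by case: (ltnP j (size G)) => [|/(nth_default 0) -> //]; case: (size G).
Qed.

Lemma edge_slope_ge s c j : rightmost_edge_slope p G s ->
  (0 < j)%N -> G`_j != 0 -> c * j%:R <= nu_gap j -> c <= s.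
Proof.
move=> /rightmost_edge_slopeE [below _] j_gt0 nz_j le_c.
rewrite -(ler_pM2r (_ : 0 < j%:R :> rat)) ?ltr0n //.
exact: le_trans le_c (below j (nz_coef_le_N _ nz_j) nz_j).
Qed.

Lemma edge_slope_le s c : rightmost_edge_slope p G s ->
  (forall j, (0 < j)%N -> G`_j != 0 -> nu_gap j <= c * j%:R) -> s <= c.
Proof.
move=> /rightmost_edge_slopeE [_ [j /andP [j_gt0 _] [nz_j eq_j]]] bound.
rewrite -(ler_pM2r (_ : 0 < j%:R :> rat)) ?ltr0n // -eq_j.
exact: bound.
Qed.

Lemma edge_slope_lt s c : rightmost_edge_slope p G s ->
  (forall j, (0 < j)%N -> G`_j != 0 -> nu_gap j < c * j%:R) -> s < c.
Proof.
move=> /rightmost_edge_slopeE [_ [j /andP [j_gt0 _] [nz_j eq_j]]] bound.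
rewrite -(ltr_pM2r (_ : 0 < j%:R :> rat)) ?ltr0n // -eq_j.
exact: bound.
Qed.

End RightmostEdge.

Section CoefficientsOfR.
Variable K : nat.
Local Notation n := (2 * K + 3)%N.
Local Notation R := (R_n2 (2 * K + 3)).

Lemma coef_R j : R`_j =
  ('X * He n)`_j + (He n)`_j.+1 + (He (2 * K + 1))`_j.+1 *+ (2 * n).
Proof. by rewrite (_ : n = (2 * K + 1).+2) ?coef_R_n2 //; lia. Qed.

Lemma coef_R_odd t : R`_(2 * t + 1) = 0.
Proof.
rewrite coef_R coefXM !coef_He_eq0 ?mul0rn ?addr0 ?if_same //;
  by apply/orP; right; lia.
Qed.

Lemma coef_R_high j : (2 * K + 4 < j)%N -> R`_j = 0.
Proof.
move=> hj; rewrite coef_R coefXM !coef_He_eq0 ?mul0rn ?addr0 ?if_same //;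
  apply/orP; left; lia.
Qed.

Lemma coef_He_n_scaled t u : (t + u = K.+2)%N ->
  (He n)`_(2 * t + 1) * (u`! * (2 * t + 1)`! * 2 ^ u)%:R
  = - (2 * u%:R) * ((-1) ^+ u * (n`!)%:R).
Proof.
case: u => [|u] h; first by rewrite coef_He_eq0 ?mul0r //; apply/orP; left; lia.
rewrite (_ : n = 2 * t + 1 + 2 * u)%N; last by lia.
rewrite (_ : (u.+1`! * _ * 2 ^ u.+1 = (u`! * (2 * t + 1)`! * 2 ^ u) * (2 * u.+1))%N);
  last by rewrite factS expnS; ring.
by rewrite natrM mulrA coef_He exprS; ring.
Qed.

Lemma coef_He_n_scaled_shift t u : (t.+1 + u = K.+2)%N ->
  (He n)`_(2 * t + 1) * (u`! * (2 * t.+1 + 1)`! * 2 ^ u)%:R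
  = (2 * t.+1%:R * (2 * t.+1%:R + 1)) * ((-1) ^+ u * (n`!)%:R).
Proof.
move=> h; rewrite (_ : n = 2 * t + 1 + 2 * u)%N; last by lia.
rewrite (_ : (2 * t.+1 + 1 = (2 * t + 1).+2)%N); last by lia.
rewrite (factS (2 * t + 1).+1) (factS (2 * t + 1)).
rewrite (_ : (u`! * _ * 2 ^ u = (u`! * (2 * t + 1)`! * 2 ^ u) * ((2 * t + 1).+2 * (2 * t + 1).+1))%N);
  last by ring.
by rewrite natrM mulrA coef_He; ring.
Qed.

Lemma coef_He_n2_scaled t u : (t + u = K.+2)%N ->
  (He (2 * K + 1))`_(2 * t + 1) * (u`! * (2 * t + 1)`! * 2 ^ u)%:R
  = (4 * u%:R * (u%:R - 1)) * ((-1) ^+ u * ((2 * K + 1)`!)%:R).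
Proof.
case: u => [|[|u]] h; try by rewrite coef_He_eq0 ?mul0r //; apply/orP; left; lia.
rewrite (_ : (2 * K + 1 = 2 * t + 1 + 2 * u)%N); last by lia.
rewrite (_ : (u.+2`! * _ * 2 ^ u.+2 = (u`! * (2 * t + 1)`! * 2 ^ u) * (4 * u.+2 * u.+1))%N);
  last by rewrite !factS !expnS; ring.
by rewrite natrM mulrA coef_He !exprS; ring.
Qed.

Lemma coef_R_even_scaled t u : (t + u = K.+2)%N ->
  R`_(2 * t) * (u`! * (2 * t + 1)`! * 2 ^ u)%:R
  = (-1) ^+ u * ((2 * K + 1)`! * n * 4 * K.+2 * (2 * t * t.-1 + K.+1))%:R.
Proof.
move=> h.
have hu : u%:R = K%:R + 2 - t%:R :> int.
  by rewrite (_ : u = K.+2 - t)%N ?natrB; [ring | lia | lia].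
have fact_n : (n`!)%:R = n%:R * (2 * K + 2)%:R * ((2 * K + 1)`!)%:R :> int.
  by rewrite (_ : n = (2 * K + 1).+2)%N ?factS ?natrM; [ring | lia].
rewrite coef_R !mulrDl mulrnAl -[(2 * t).+1]addn1 (coef_He_n_scaled _ _ h) (coef_He_n2_scaled _ _ h).
case: t h hu => [|t] h hu.
  by rewrite coefXM /= mul0r add0r fact_n hu; ring.
rewrite coefXM (_ : (2 * t.+1 == 0)%N = false) // (_ : (2 * t.+1).-1 = 2 * t + 1)%N; last by lia.
by rewrite (coef_He_n_scaled_shift _ _ h) fact_n hu; ring.
Qed.

Lemma abs_coef_R_even t u : (t + u = K.+2)%N ->
  (`|(R`_(2 * t))%R| * (u`! * (2 * t + 1)`! * 2 ^ u)
   = (2 * K + 1)`! * n * 4 * K.+2 * (2 * t * t.-1 + K.+1))%N.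
Proof.
move=> h; have := congr1 (fun z : int => `|z|%N) (coef_R_even_scaled _ _ h).
by rewrite abszM abszMsign !natz !absz_nat.
Qed.

Lemma coef_R_even_neq0 t : (t <= K.+2)%N -> R`_(2 * t) != 0.
Proof.
move=> ht; apply/eqP => R0.
have : (0 < (2 * K + 1)`! * n * 4 * K.+2 * (2 * t * t.-1 + K.+1))%N.
  by rewrite !muln_gt0 fact_gt0; lia.
by rewrite -(abs_coef_R_even t (K.+2 - t)) ?R0 //; lia.
Qed.

Lemma size_R : size R = (2 * K + 5)%N.
Proof.
apply/eqP; rewrite eqn_leq; apply/andP; split.
  by apply/leq_sizeP => j hj; apply: coef_R_high; lia.
rewrite leqNgt; apply/negP => hs.
have /leq_sizeP /(_ (2 * K.+2)%N (leqnn _)) /eqP : (size R <= 2 * K.+2)%N by lia.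
exact/negP/coef_R_even_neq0.
Qed.

Lemma nu_R_even t u : (t + u = K.+2)%N ->
  (nu 3 R`_(2 * t) + logn 3 u`! + logn 3 (2 * t + 1)`!
   = logn 3 (2 * K + 1)`! + logn 3 n + logn 3 K.+2 + logn 3 (2 * t * t.-1 + K.+1))%N.
Proof.
move=> h; have := congr1 (logn 3) (abs_coef_R_even _ _ h).
have nz : (0 < `|(R`_(2 * t))%R|)%N by rewrite absz_gt0 coef_R_even_neq0 //; lia.
rewrite /nu !lognM ?muln_gt0 ?fact_gt0 ?expn_gt0 ?nz //=; try nia.
by rewrite lognX (logn_coprime (isT : coprime 3 2)) (logn_coprime (isT : coprime 3 4)); lia.
Qed.

Lemma nu_R_coef0 : (nu 3 R`_0 + logn 3 K.+2`!
  = logn 3 (2 * K + 1)`! + logn 3 n + logn 3 K.+2 + logn 3 K.+1)%N.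
Proof. by have := nu_R_even 0 K.+2 erefl; rewrite muln0 addn0. Qed.

(* The drop of valuation at t = 1 is 1 - nu_3(K+2) ... *)
Lemma nu_R_gap_one : (nu 3 R`_0 + logn 3 K.+2 = nu 3 R`_2 + 1)%N.
Proof.
have := nu_R_even 1 K.+1 erefl; rewrite muln1 (_ : 1.-1 = 0)%N // muln0 add0n.
rewrite (_ : logn 3 (2 + 1)`! = 1)%N //.
have := nu_R_coef0; rewrite !factS !lognM ?muln_gt0 ?fact_gt0 //; lia.
Qed.

(* ... and it is at most t - nu_3(K+2) at any 0 < t <= K + 2, using
   nu_3((2t+1)!) <= t and nu_3((K+2-t)!) <= nu_3(K!). *)
Lemma nu_R_gap t : (0 < t <= K.+2)%N ->
  (nu 3 R`_0 + logn 3 K.+2 <= nu 3 R`_(2 * t) + t)%N.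
Proof.
case: t => [//|[_|t /andP [_ le_tK]]]; first by rewrite nu_R_gap_one.
have := nu_R_even t.+2 (K - t) ltac:(lia).
have := logn_fact_lt 3 (2 * t.+2 + 1) isT isT.
have := logn_fact_mono 3 (K - t) K (leq_subr _ _).
have := nu_R_coef0; rewrite !factS !lognM ?muln_gt0 ?fact_gt0 //; lia.
Qed.

Lemma nu_gap_R_le j : (0 < j)%N -> R`_j != 0 ->
  nu_gap 3 R j + (logn 3 K.+2)%:R <= 1 / 2 * j%:R.
Proof.
move=> j_gt0 nz_j.
have [t def_j] : exists t, j = (2 * t)%N.
  case/boolP: (odd j) => odd_j; last by exists j./2; lia.
  by move: nz_j; rewrite (_ : j = 2 * j./2 + 1)%N ?coef_R_odd ?eqxx //; lia.
have le_tK : (t <= K.+2)%N.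
  by rewrite leqNgt; apply: contra nz_j => ?; rewrite coef_R_high //; lia.
have := nu_R_gap t ltac:(lia); rewrite -(ler_nat rat) !natrD def_j /nu_gap natrM.
lra.
Qed.

Lemma nu_gap_R_two : nu_gap 3 R 2 + (logn 3 K.+2)%:R = 1.
Proof.
have /eqP := nu_R_gap_one; rewrite -(eqr_nat rat) !natrD /nu_gap => /eqP; lra.
Qed.

End CoefficientsOfR.

Theorem mainTheorem18 (n : nat) (hn3 : (3 <= n)%N) (hodd : odd n) :
  exists s : rat, rightmost_edge_slope 3 (R_n2 n) s /\
    ((3 %| n.+1)%N -> s < 1 / 2) /\
    (~~ (3 %| n.+1)%N -> s = 1 / 2).
Proof.
have [K ->] : exists K, n = (2 * K + 3)%N by exists (n./2 - 1)%N; lia.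
have [s slope_s] := edge_slope_exists 3 (R_n2 (2 * K + 3)) ltac:(rewrite size_R; lia).
exists s; split=> //.
have -> : (3 %| (2 * K + 3).+1)%N = (0 < logn 3 K.+2)%N.
  rewrite logn_gt0 mem_primes (_ : (2 * K + 3).+1 = 2 * K.+2)%N; last by lia.
  by rewrite Euclid_dvdM.
rewrite -leqNgt leqn0; split=> [v_gt0 | /eqP v0].
  apply: edge_slope_lt slope_s _ => j j_gt0 nz_j.
  by have := nu_gap_R_le K j j_gt0 nz_j; rewrite -(ltr_nat rat) in v_gt0; lra.
apply/eqP; rewrite eq_le; apply/andP; split.
  apply: edge_slope_le slope_s _ => j j_gt0 nz_j.
  by have := nu_gap_R_le K j j_gt0 nz_j; rewrite v0; lra.
apply: (edge_slope_ge _ _ _ _ 2 slope_s) => //; first exact: (coef_R_even_neq0 K 1).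
by have := nu_gap_R_two K; rewrite v0; lra.
Qed.
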